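(* Let $W\in\{\mathrm{A}_{\frac12\infty},\mathrm{D}_{\frac12\infty}\}$ and $\lambda\in\mathbb{C}$, and set $\check H_{W,\lambda}=\{\xi\in\check H_{W,\mathbb{C}}:\dot I_W(\xi)=\lambda\xi\}$, $\overline H_{W,\lambda}=\check H_{W,\lambda}\cap\overline H_{W,\mathbb{C}}$. Then $\dim_{\mathbb{C}}\check H_{W,\lambda}=1$ and $\dim_{\mathbb{C}}\overline H_{W,\lambda}=0$, except in the case $W=\mathrm{D}_{\frac12\infty}$, $\lambda=2$, where $\dim_{\mathbb{C}}\check H_{W,2}=2$, $\dim_{\mathbb{C}}\overline H_{W,2}=1$, and $\overline H_{W,2}$ is spanned by $\gamma_{c_0^+}-\gamma_{c_0^-}$.
   Context: Index sets: $C_{W,0}=\{c_0^{(n)}:n\ge1\}$ (type $\mathrm{A}_{\frac12\infty}$) or $\{c_0^{(n)}:n\ge1\}\cup\{c_0^+,c_0^-\}$ (type $\mathrm{D}_{\frac12\infty}$); $C_{W,1}=\{c_1^{(n)}:n\ge1\}$; $C_W=C_{W,0}\sqcup C_{W,1}$. Adjacency: $c_0^{(n)}$ is adjacent to $c_1^{(n)}$ and $c_1^{(n+1)}$ ($n\ge1$); in type D, $c_0^\pm$ are adjacent to $c_1^{(1)}$; no others. $\overline H_{W,\mathbb{C}}$ is the Hilbert space $\ell^2(C_W)$ with orthonormal basis $\{\gamma_c\}$, and $\check H_{W,\mathbb{C}}=\prod_{c\in C_W}\mathbb{C}\gamma_c$ is the space of all formal sums $\sum a_c\gamma_c$. $I_W$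 is the symmetric form with $I_W(\gamma_c,\gamma_c)=2$, $I_W(\gamma_c,\gamma_{c'})=-1$ if $c,c'$ adjacent, $0$ otherwise (i.e. $I_W=J_W+{}^tJ_W$, the intersection form for suspension dimension $d\equiv0\bmod 4$), and $\dot I_W(\xi)=\sum_{c}I_W(\xi,\gamma_c)\gamma_c$, which is well defined on $\check H_{W,\mathbb{C}}$ since each index has finitely many neighbours. *)

From Stdlib Require Import Reals.
From Coquelicot Require Import Coquelicot.
Open Scope R_scope.

Inductive Wtype := TypeA | TypeD .

(* Indices: c0 n = c_0^{(n+1)}, c1 n = c_1^{(n+1)}, c0p = c_0^+, c0m = c_0^-.
   c0p, c0m belong to C_W only when W = TypeD. *)
Inductive Idx := c0 (n : nat) | c1 (n : nat) | c0p | c0m.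

Definition Idx_eq_dec (a b : Idx) : {a = b} + {a <> b}.
Proof. decide equality; apply Nat.eq_dec. Defined.

Definition inCW (W : Wtype) (c : Idx) : Prop :=
  match c with
  | c0p | c0m => W = TypeD
  | _ => True
  end.

(* Formal sums sum_c a_c gamma_c, c in C_W, as functions Idx -> C vanishing off C_W. *)
Definition checkH (W : Wtype) (xi : Idx -> C) : Prop :=
  forall c, ~ inCW W c -> xi c = RtoC 0.

Definition gamma (c : Idx) : Idx -> C :=
  fun c' => if Idx_eq_dec c c' then RtoC 1 else RtoC 0.

(* \dot I_W (xi) = sum_c I_W(xi, gamma_c) gamma_c ; coefficient at c is
   2 xi_c - sum of xi over the neighbours of c in C_W. *)
Definition Idot (W : Wtype) (xi : Idx -> C) (c : Idx) : C :=
  match c with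
  | c0 n => Cminus (Cmult (RtoC 2) (xi (c0 n))) (Cplus (xi (c1 n)) (xi (c1 (S n))))
  | c1 O =>
      match W with
      | TypeA => Cminus (Cmult (RtoC 2) (xi (c1 O))) (xi (c0 O))
      | TypeD => Cminus (Cmult (RtoC 2) (xi (c1 O)))
                        (Cplus (xi (c0 O)) (Cplus (xi c0p) (xi c0m)))
      end
  | c1 (S n) => Cminus (Cmult (RtoC 2) (xi (c1 (S n)))) (Cplus (xi (c0 n)) (xi (c0 (S n))))
  | c0p => match W with
           | TypeA => RtoC 0
           | TypeD => Cminus (Cmult (RtoC 2) (xi c0p)) (xi (c1 O))
           end
  | c0m => match W with
           | TypeA => RtoC 0
           | TypeD => Cminus (Cmult (RtoC 2) (xi c0m)) (xi (c1 O))
           end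
  end.

(* Membership in the Hilbert space l^2(C_W) (c0p, c0m are finitely many). *)
Definition inl2 (xi : Idx -> C) : Prop :=
  ex_series (fun n => (Cmod (xi (c0 n)))^2) /\ ex_series (fun n => (Cmod (xi (c1 n)))^2).

Definition checkHeig (W : Wtype) (lam : C) (xi : Idx -> C) : Prop :=
  checkH W xi /\ forall c, Idot W xi c = Cmult lam (xi c).

Definition barHeig (W : Wtype) (lam : C) (xi : Idx -> C) : Prop :=
  checkHeig W lam xi /\ inl2 xi.

Fixpoint csum (k : nat) (f : nat -> C) : C :=
  match k with O => RtoC 0 | S k' => Cplus (csum k' f) (f k') end.

Definition dimC (S : (Idx -> C) -> Prop) (k : nat) : Prop :=
  exists v : nat -> Idx -> C,
    (forall i, (i < k)%nat -> S (v i)) /\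
    (forall a : nat -> C,
        (forall c, csum k (fun i => Cmult (a i) (v i c)) = RtoC 0) ->
        forall i, (i < k)%nat -> a i = RtoC 0) /\
    (forall xi, S xi -> exists a : nat -> C,
        forall c, xi c = csum k (fun i => Cmult (a i) (v i c))).

(* Away from the boundary an eigenvector is a solution of the recurrence
   z_{k+2} = (2 - lam) z_{k+1} - z_k along c_1^(1), c_0^(1), c_1^(2), c_0^(2), ..., so it is
   determined by its boundary values: xi(c_1^(1)) in type A, xi(c_0^+) and xi(c_0^-) in type D,
   where moreover xi(c_0^+) = xi(c_0^-) unless lam = 2.  This gives the dimensions of the
   formal eigenspaces.  The quadratic form a^2 - (2 - lam) a b + b^2 of consecutive terms is
   conserved by the recurrence; for xi in l^2 it tends to 0, hence vanishes identically.
   Evaluated at the boundary this forces xi = 0, except in type D with lam = 2, where it only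
   gives xi(c_0^+) + xi(c_0^-) = 0. *)

From Pilot Require Import Defs.
From Stdlib Require Import Reals Lra Lia FunctionalExtensionality.
From Coquelicot Require Import Coquelicot.

(* [Reals] exports [RiemannInt.c1], which would otherwise shadow the index constructor. *)
Notation c1 := Defs.c1.

Local Open Scope C_scope.

Lemma Cmult_integral (a b : C) : a * b = 0 -> a = 0 \/ b = 0.
Proof.
  intro H. apply (f_equal Cmod) in H. rewrite Cmod_mult, Cmod_0 in H.
  destruct (Rmult_integral _ _ H); [left | right]; now apply Cmod_eq_0.
Qed.

Lemma Csq_eq0 (a : C) : a * a = 0 -> a = 0.
Proof. now intros [|]%Cmult_integral. Qed.

Lemma Cmult_cancel_l (k a b : C) : k <> 0 -> k * a = k * b -> a = b.
Proof.
  intros Hk E. apply Ceq_minus.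
  destruct (Cmult_integral k (a - b)) as [|]; [|contradiction|assumption].
  replace (k * (a - b)) with (k * a - k * b) by ring. exact (proj1 (Ceq_minus _ _) E).
Qed.

Lemma C_eq_of_sub (x y A B : C) : A = B -> x - y = B - A -> x = y.
Proof. intros -> E. apply Ceq_minus. rewrite E. ring. Qed.

Lemma RtoC_neq (x y : R) : x <> y -> RtoC x <> RtoC y.
Proof. intros H E. apply H. now injection E. Qed.

Definition mu (lam : C) : C := RtoC 2 - lam.

Lemma mu_neq0 (lam : C) : lam <> RtoC 2 -> mu lam <> 0.
Proof.
  intros H E. apply H. apply Ceq_minus.
  replace (lam - RtoC 2) with (- mu lam) by (unfold mu; ring). rewrite E. ring.
Qed.

Lemma mu_two : mu (RtoC 2) = 0.
Proof. unfold mu. ring. Qed.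

Definition Qform (m a b : C) : C := a * a - m * (a * b) + b * b.

Lemma Qform_step (m a b : C) : Qform m b (m * b - a) = Qform m a b.
Proof. unfold Qform. ring. Qed.

Lemma Qform_bound (m a b : C) :
  (Cmod (Qform m a b) <= (1 + Cmod m) * (Cmod a ^ 2 + Cmod b ^ 2))%R.
Proof.
  unfold Qform, Cminus.
  eapply Rle_trans; [apply Cmod_triangle|].
  eapply Rle_trans; [apply Rplus_le_compat_r, Cmod_triangle|].
  rewrite Cmod_opp, !Cmod_mult.
  pose proof (Cmod_ge_0 a). pose proof (Cmod_ge_0 b). pose proof (Cmod_ge_0 m).
  assert (Cmod a * Cmod b <= Cmod a ^ 2 + Cmod b ^ 2)%R by nra.
  nra.
Qed.

Lemma Qform_degenerate (m a b : C) : m * m = 4 -> Qform m a b = 0 -> 2 * b = m * a.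
Proof.
  intros Hm HQ. apply Ceq_minus, Csq_eq0.
  replace ((2 * b - m * a) * (2 * b - m * a)) with ((m * m - 4) * (a * a) + 4 * Qform m a b)
    by (unfold Qform; ring).
  rewrite Hm, HQ. ring.
Qed.

Section Recurrence.

Variables (W : Wtype) (lam : C) (xi : Idx -> C).
Hypothesis Hxi : checkHeig W lam xi.

Lemma eig_c1S (n : nat) : xi (c1 (S n)) = mu lam * xi (c0 n) - xi (c1 n).
Proof. apply (C_eq_of_sub _ _ _ _ (proj2 Hxi (c0 n))). unfold mu. simpl. ring. Qed.

Lemma eig_c0S (n : nat) : xi (c0 (S n)) = mu lam * xi (c1 (S n)) - xi (c0 n).
Proof. apply (C_eq_of_sub _ _ _ _ (proj2 Hxi (c1 (S n)))). unfold mu. simpl. ring. Qed.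

Lemma eig_vanish_from_start :
  xi (c1 0) = 0 -> xi (c0 0) = 0 -> forall n, xi (c1 n) = 0 /\ xi (c0 n) = 0.
Proof.
  intros H1 H0 n. induction n as [|n [IH1 IH0]]; [auto|].
  assert (E : xi (c1 (S n)) = 0) by (rewrite eig_c1S, IH1, IH0; ring).
  split; [exact E|]. rewrite eig_c0S, E, IH0. ring.
Qed.

Lemma Qform_chain (n : nat) :
  Qform (mu lam) (xi (c1 n)) (xi (c0 n)) = Qform (mu lam) (xi (c1 0)) (xi (c0 0)).
Proof.
  induction n as [|n IH]; [reflexivity|].
  rewrite eig_c0S, Qform_step, eig_c1S, Qform_step. exact IH.
Qed.

End Recurrence.

Lemma eigA_c0_0 (lam : C) (xi : Idx -> C) :
  checkHeig TypeA lam xi -> xi (c0 0) = mu lam * xi (c1 0).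
Proof. intros [_ H]. apply (C_eq_of_sub _ _ _ _ (H (c1 0))). unfold mu. simpl. ring. Qed.

Lemma eigD_c0_0 (lam : C) (xi : Idx -> C) :
  checkHeig TypeD lam xi -> xi (c0 0) = mu lam * xi (c1 0) - (xi c0p + xi c0m).
Proof. intros [_ H]. apply (C_eq_of_sub _ _ _ _ (H (c1 0))). unfold mu. simpl. ring. Qed.

Lemma eigD_c1_0_p (lam : C) (xi : Idx -> C) :
  checkHeig TypeD lam xi -> xi (c1 0) = mu lam * xi c0p.
Proof. intros [_ H]. apply (C_eq_of_sub _ _ _ _ (H c0p)). unfold mu. simpl. ring. Qed.

Lemma eigD_c1_0_m (lam : C) (xi : Idx -> C) :
  checkHeig TypeD lam xi -> xi (c1 0) = mu lam * xi c0m.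
Proof. intros [_ H]. apply (C_eq_of_sub _ _ _ _ (H c0m)). unfold mu. simpl. ring. Qed.

Lemma eigA_eq0 (lam : C) (xi : Idx -> C) :
  checkHeig TypeA lam xi -> xi (c1 0) = 0 -> forall c, xi c = 0.
Proof.
  intros H H1.
  assert (H0 : xi (c0 0) = 0) by (rewrite (eigA_c0_0 _ _ H), H1; ring).
  intros [n|n| |]; try apply (eig_vanish_from_start _ _ _ H H1 H0 n);
    apply (proj1 H); discriminate.
Qed.

Lemma eigD_eq0 (lam : C) (xi : Idx -> C) :
  checkHeig TypeD lam xi -> xi c0p = 0 -> xi c0m = 0 -> forall c, xi c = 0.
Proof.
  intros H Hp Hm.
  assert (H1 : xi (c1 0) = 0) by (rewrite (eigD_c1_0_p _ _ H), Hp; ring).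
  assert (H0 : xi (c0 0) = 0) by (rewrite (eigD_c0_0 _ _ H), H1, Hp, Hm; ring).
  intros [n|n| |]; try apply (eig_vanish_from_start _ _ _ H H1 H0 n); assumption.
Qed.

Lemma eigD_p_eq_m (lam : C) (xi : Idx -> C) :
  lam <> RtoC 2 -> checkHeig TypeD lam xi -> xi c0m = xi c0p.
Proof.
  intros Hl H. apply (Cmult_cancel_l (mu lam)); [now apply mu_neq0|].
  now rewrite <- (eigD_c1_0_m _ _ H), <- (eigD_c1_0_p _ _ H).
Qed.

Lemma Idot_add (W : Wtype) (xi eta : Idx -> C) (c : Idx) :
  Idot W (fun c => xi c + eta c) c = Idot W xi c + Idot W eta c.
Proof. destruct c as [n|[|n]| |]; destruct W; simpl; ring. Qed.

Lemma Idot_scal (W : Wtype) (t : C) (xi : Idx -> C) (c : Idx) :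
  Idot W (fun c => t * xi c) c = t * Idot W xi c.
Proof. destruct c as [n|[|n]| |]; destruct W; simpl; ring. Qed.

Lemma checkHeig_add (W : Wtype) (lam : C) (xi eta : Idx -> C) :
  checkHeig W lam xi -> checkHeig W lam eta -> checkHeig W lam (fun c => xi c + eta c).
Proof.
  intros [H1 H2] [H3 H4]. split.
  - intros c Hc. rewrite H1, H3 by exact Hc. ring.
  - intro c. rewrite Idot_add, H2, H4. ring.
Qed.

Lemma checkHeig_scal (W : Wtype) (lam t : C) (xi : Idx -> C) :
  checkHeig W lam xi -> checkHeig W lam (fun c => t * xi c).
Proof.
  intros [H1 H2]. split.
  - intros c Hc. rewrite H1 by exact Hc. ring.
  - intro c. rewrite Idot_scal, H2. ring.
Qed.

Lemma checkHeig_sub (W : Wtype) (lam : C) (xi eta : Idx -> C) :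
  checkHeig W lam xi -> checkHeig W lam eta -> checkHeig W lam (fun c => xi c + -1 * eta c).
Proof. intros Hxi Heta. apply (checkHeig_add _ _ _ _ Hxi (checkHeig_scal _ _ _ _ Heta)). Qed.

Lemma eigA_unique (lam : C) (xi eta : Idx -> C) :
  checkHeig TypeA lam xi -> checkHeig TypeA lam eta -> xi (c1 0) = eta (c1 0) ->
  forall c, xi c = eta c.
Proof.
  intros Hxi Heta E c. apply Ceq_minus.
  replace (xi c - eta c) with (xi c + -1 * eta c) by ring.
  apply (eigA_eq0 _ _ (checkHeig_sub _ _ _ _ Hxi Heta)). rewrite E. ring.
Qed.

Lemma eigD_unique (lam : C) (xi eta : Idx -> C) :
  checkHeig TypeD lam xi -> checkHeig TypeD lam eta ->
  xi c0p = eta c0p -> xi c0m = eta c0m -> forall c, xi c = eta c.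
Proof.
  intros Hxi Heta Ep Em c. apply Ceq_minus.
  replace (xi c - eta c) with (xi c + -1 * eta c) by ring.
  apply (eigD_eq0 _ _ (checkHeig_sub _ _ _ _ Hxi Heta)); [rewrite Ep | rewrite Em]; ring.
Qed.

Fixpoint chain (m a b : C) (n : nat) : C * C :=
  match n with
  | O => (a, b)
  | S n' =>
      let (x, y) := chain m a b n' in
      (m * y - x, m * (m * y - x) - y)
  end.

Definition eig_from (m a b p q : C) : Idx -> C := fun c =>
  match c with
  | c1 n => fst (chain m a b n)
  | c0 n => snd (chain m a b n)
  | c0p => p
  | c0m => q
  end.

Lemma Idot_eig_from_interior (W : Wtype) (lam a b p q : C) (n : nat) :
  let v := eig_from (mu lam) a b p q in
  Idot W v (c0 n) = lam * v (c0 n) /\ Idot W v (c1 (S n)) = lam * v (c1 (S n)).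
Proof. simpl. destruct (chain (mu lam) a b n). simpl. unfold mu. split; ring. Qed.

Definition eigA_vec (lam : C) : Idx -> C := eig_from (mu lam) 1 (mu lam) 0 0.

Definition eigD_vec (lam p q : C) : Idx -> C :=
  eig_from (mu lam) (mu lam * p) (mu lam * (mu lam * p) - (p + q)) p q.

Lemma checkHeig_eigA_vec (lam : C) : checkHeig TypeA lam (eigA_vec lam).
Proof.
  split.
  - intros [n|n| |] Hc; try reflexivity; now elim Hc.
  - intros [n|[|n]| |]; try apply Idot_eig_from_interior;
      simpl; unfold mu; ring.
Qed.

Lemma checkHeig_eigD_vec (lam p q : C) :
  mu lam * p = mu lam * q -> checkHeig TypeD lam (eigD_vec lam p q).
Proof.
  intro Hpq. split.
  - intros c Hc; destruct c; now elim Hc.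
  - intros [n|[|n]| |]; try apply Idot_eig_from_interior; simpl.
    + unfold mu. ring.
    + unfold mu. ring.
    + rewrite Hpq. unfold mu. ring.
Qed.

Lemma checkHeig_eigD2_vec (p q : C) : checkHeig TypeD (RtoC 2) (eigD_vec (RtoC 2) p q).
Proof. apply checkHeig_eigD_vec. rewrite mu_two. ring. Qed.

Lemma eigA_span (lam : C) (xi : Idx -> C) :
  checkHeig TypeA lam xi -> forall c, xi c = xi (c1 0) * eigA_vec lam c.
Proof.
  intro H. apply (eigA_unique lam _ _ H (checkHeig_scal _ _ _ _ (checkHeig_eigA_vec lam))).
  simpl. ring.
Qed.

Lemma eigD_span (lam : C) (xi : Idx -> C) :
  lam <> RtoC 2 -> checkHeig TypeD lam xi -> forall c, xi c = xi c0p * eigD_vec lam 1 1 c.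
Proof.
  intros Hl H.
  apply (eigD_unique lam _ _ H (checkHeig_scal _ _ _ _ (checkHeig_eigD_vec lam 1 1 eq_refl)));
    simpl; [|rewrite (eigD_p_eq_m _ _ Hl H)]; ring.
Qed.

Lemma eigD2_span (xi : Idx -> C) :
  checkHeig TypeD (RtoC 2) xi -> forall c,
  xi c = xi c0p * eigD_vec (RtoC 2) 1 0 c + xi c0m * eigD_vec (RtoC 2) 0 1 c.
Proof.
  intro H.
  apply (eigD_unique _ _ _ H (checkHeig_add _ _ _ _
           (checkHeig_scal _ _ _ _ (checkHeig_eigD2_vec _ _))
           (checkHeig_scal _ _ _ _ (checkHeig_eigD2_vec _ _))));
    simpl; ring.
Qed.

Lemma dimC_0 (S : (Idx -> C) -> Prop) :
  (forall xi, S xi -> forall c, xi c = 0) -> dimC S 0.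
Proof.
  intro H. exists (fun _ _ => 0). split; [|split].
  - intros i Hi. lia.
  - intros a _ i Hi. lia.
  - intros xi Hxi. exists (fun _ => 0). exact (H xi Hxi).
Qed.

Lemma dimC_1 (S : (Idx -> C) -> Prop) (v : Idx -> C) (c : Idx) :
  S v -> v c = 1 -> (forall xi, S xi -> exists t, forall c', xi c' = t * v c') -> dimC S 1.
Proof.
  intros Hv Hc Hspan. exists (fun _ => v). split; [|split].
  - intros; exact Hv.
  - intros a Ha i Hi. replace i with O by lia.
    specialize (Ha c). simpl in Ha. rewrite Hc in Ha. rewrite <- Ha. ring.
  - intros xi Hxi. destruct (Hspan xi Hxi) as [t Ht]. exists (fun _ => t).
    intro c'. simpl. rewrite Ht. ring.
Qed.

Lemma dimC_2 (S : (Idx -> C) -> Prop) (v0 v1 : Idx -> C) (c c' : Idx) :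
  S v0 -> S v1 -> v0 c = 1 -> v1 c = 0 -> v0 c' = 0 -> v1 c' = 1 ->
  (forall xi, S xi -> exists s t, forall d, xi d = s * v0 d + t * v1 d) -> dimC S 2.
Proof.
  intros Hv0 Hv1 H0c H1c H0c' H1c' Hspan.
  exists (fun i => match i with O => v0 | _ => v1 end). split; [|split].
  - intros [|i] _; assumption.
  - intros a Ha i Hi. pose proof (Ha c) as Ec. pose proof (Ha c') as Ec'. simpl in Ec, Ec'.
    rewrite H0c, H1c in Ec. rewrite H0c', H1c' in Ec'.
    destruct i as [|[|i]].
    + rewrite <- Ec. ring.
    + rewrite <- Ec'. ring.
    + exfalso. lia.
  - intros xi Hxi. destruct (Hspan xi Hxi) as [s [t Hst]].
    exists (fun i => match i with O => s | _ => t end). intro d. simpl. rewrite Hst. ring.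
Qed.

Lemma le_0_of_le_summable (K k : R) (A B : nat -> R) :
  ex_series A -> ex_series B -> (forall n, K <= k * (A n + B n))%R -> (K <= 0)%R.
Proof.
  intros HA HB H.
  assert (L : is_lim_seq (fun n => k * (A n + B n))%R (Rbar_mult k (0 + 0)%R)).
  { apply is_lim_seq_scal_l, is_lim_seq_plus'; now apply ex_series_lim_0. }
  pose proof (is_lim_seq_le _ _ _ _ H (is_lim_seq_const K) L) as Le.
  simpl in Le. lra.
Qed.

Lemma barHeig_Qform0 (W : Wtype) (lam : C) (xi : Idx -> C) :
  barHeig W lam xi -> Qform (mu lam) (xi (c1 0)) (xi (c0 0)) = 0.
Proof.
  intros [H [L0 L1]]. apply Cmod_eq_0, Rle_antisym; [|apply Cmod_ge_0].
  apply (le_0_of_le_summable _ (1 + Cmod (mu lam)) _ _ L1 L0). intro n.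
  rewrite <- (Qform_chain _ _ _ H n). apply Qform_bound.
Qed.

Lemma barHeig_c1_const_eq0 (W : Wtype) (lam : C) (xi : Idx -> C) :
  barHeig W lam xi -> (forall n, xi (c1 n) = xi (c1 0)) -> xi (c1 0) = 0.
Proof.
  intros [_ [L0 L1]] Hconst. apply Cmod_eq_0.
  assert (Hsq : (Cmod (xi (c1 0)) ^ 2 <= 0)%R).
  { apply (le_0_of_le_summable _ 1 _ _ L1 L0). intro n. rewrite (Hconst n).
    pose proof (pow2_ge_0 (Cmod (xi (c0 n)))). lra. }
  pose proof (Cmod_ge_0 (xi (c1 0))). nra.
Qed.

(* For [mu^2 = 4], [4 Qform mu a b = (2 b - mu a)^2], so a vanishing form makes
   [xi (c1 n)] constant, which is incompatible with summability unless it is zero. *)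
Lemma barHeig_mu_sq4 (W : Wtype) (lam : C) (xi : Idx -> C) :
  barHeig W lam xi -> mu lam * mu lam = 4 -> xi (c1 0) = 0.
Proof.
  intros Hb Hm. pose proof (proj1 Hb) as H.
  apply (barHeig_c1_const_eq0 _ _ _ Hb).
  assert (Q0 : forall n, Qform (mu lam) (xi (c1 n)) (xi (c0 n)) = 0).
  { intro n. rewrite (Qform_chain _ _ _ H). exact (barHeig_Qform0 _ _ _ Hb). }
  intro n. induction n as [|n IH]; [reflexivity|]. rewrite <- IH.
  apply (Cmult_cancel_l 4); [apply RtoC_neq; lra|].
  assert (Ey : 2 * xi (c0 n) = mu lam * xi (c1 n)) by exact (Qform_degenerate _ _ _ Hm (Q0 n)).
  assert (Ex : 2 * xi (c1 (S n)) = mu lam * xi (c0 n)).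
  { apply (Qform_degenerate _ _ _ Hm). rewrite (eig_c1S _ _ _ H), Qform_step. apply Q0. }
  replace (4 * xi (c1 (S n))) with (2 * (2 * xi (c1 (S n)))) by ring.
  rewrite Ex. replace (2 * (mu lam * xi (c0 n))) with (mu lam * (2 * xi (c0 n))) by ring.
  rewrite Ey, Cmult_assoc, Hm. reflexivity.
Qed.

Lemma barHeigA_eq0 (lam : C) (xi : Idx -> C) : barHeig TypeA lam xi -> forall c, xi c = 0.
Proof.
  intro Hb. apply (eigA_eq0 lam _ (proj1 Hb)), Csq_eq0.
  rewrite <- (barHeig_Qform0 _ _ _ Hb), (eigA_c0_0 _ _ (proj1 Hb)). unfold Qform. ring.
Qed.

Lemma barHeigD_eq0 (lam : C) (xi : Idx -> C) :
  lam <> RtoC 2 -> barHeig TypeD lam xi -> forall c, xi c = 0.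
Proof.
  intros Hl Hb. pose proof (proj1 Hb) as H.
  assert (Hp : xi c0p = 0).
  { assert (EQ : xi c0p * xi c0p * (4 - mu lam * mu lam) = 0).
    { rewrite <- (barHeig_Qform0 _ _ _ Hb), (eigD_c0_0 _ _ H), (eigD_p_eq_m _ _ Hl H),
        (eigD_c1_0_p _ _ H). unfold Qform. ring. }
    destruct (Cmult_integral _ _ EQ) as [E | E]; [now apply Csq_eq0|].
    apply (Cmult_cancel_l (mu lam)); [now apply mu_neq0|].
    rewrite <- (eigD_c1_0_p _ _ H), Cmult_0_r. apply (barHeig_mu_sq4 _ _ _ Hb).
    symmetry. apply Ceq_minus. rewrite <- E. ring. }
  apply (eigD_eq0 lam _ H Hp). now rewrite (eigD_p_eq_m _ _ Hl H).
Qed.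

Lemma barHeigD2_sum (xi : Idx -> C) : barHeig TypeD (RtoC 2) xi -> xi c0p + xi c0m = 0.
Proof.
  intro Hb. apply Csq_eq0.
  rewrite <- (barHeig_Qform0 _ _ _ Hb), (eigD_c0_0 _ _ (proj1 Hb)), (eigD_c1_0_p _ _ (proj1 Hb)),
    mu_two.
  unfold Qform. ring.
Qed.

Lemma ex_series_zero : ex_series (fun _ : nat => 0%R).
Proof.
  apply (ex_series_ext (fun n => scal 0%R (0 ^ n)%R)).
  - intro n. apply Rmult_0_l.
  - apply (@ex_series_scal_l R_AbsRing R_NormedModule), ex_series_geom. rewrite Rabs_R0. lra.
Qed.

Lemma inl2_scal (t : C) (xi : Idx -> C) : inl2 xi -> inl2 (fun c => t * xi c).
Proof.
  assert (Hsq : forall a, (Cmod (t * a) ^ 2 = scal (Cmod t ^ 2) (Cmod a ^ 2))%R)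
    by (intro; rewrite Cmod_mult; unfold scal; simpl; unfold mult; simpl; ring).
  intros [L0 L1]. split; eapply ex_series_ext; try (intro; symmetry; apply Hsq);
    apply (@ex_series_scal_l R_AbsRing R_NormedModule); assumption.
Qed.

Lemma barHeig_scal (W : Wtype) (lam t : C) (xi : Idx -> C) :
  barHeig W lam xi -> barHeig W lam (fun c => t * xi c).
Proof. intros [H L]. split; [apply checkHeig_scal | apply inl2_scal]; assumption. Qed.

Definition gamma_diff : Idx -> C := fun c => gamma c0p c - gamma c0m c.

Lemma barHeig_gamma_diff : barHeig TypeD (RtoC 2) gamma_diff.
Proof.
  split; [split|].
  - intros [n|n| |] Hc; now elim Hc.
  - intros [n|[|n]| |]; unfold gamma_diff, gamma; simpl; ring.
  - split; (apply (ex_series_ext (fun _ => 0%R)); [|exact ex_series_zero]);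
      intro n; unfold gamma_diff, gamma; simpl;
      replace (RtoC 0 - RtoC 0) with (RtoC 0) by ring; rewrite Cmod_0; ring.
Qed.

Lemma barHeigD2_span (xi : Idx -> C) :
  barHeig TypeD (RtoC 2) xi -> forall c, xi c = xi c0p * gamma_diff c.
Proof.
  intro Hb. apply (eigD_unique _ _ _ (proj1 Hb) (proj1 (barHeig_scal _ _ _ _ barHeig_gamma_diff)));
    unfold gamma_diff, gamma; simpl; [ring|].
  apply (C_eq_of_sub _ _ _ _ (eq_sym (barHeigD2_sum _ Hb))). ring.
Qed.

Close Scope C_scope.

Theorem mainTheorem9 (W : Wtype) (lam : C) :
  (~ (W = TypeD /\ lam = RtoC 2) ->
     dimC (checkHeig W lam) 1 /\ dimC (barHeig W lam) 0) /\
  (W = TypeD -> lam = RtoC 2 ->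
     dimC (checkHeig W lam) 2 /\ dimC (barHeig W lam) 1 /\
     (forall xi, barHeig W lam xi <->
        exists t : C, xi = (fun c => Cmult t (Cminus (gamma c0p c) (gamma c0m c))))).
Proof.
  split.
  - intro Hn. destruct W.
    + split.
      * apply (dimC_1 _ _ (c1 0) (checkHeig_eigA_vec lam) eq_refl).
        intros xi H. exists (xi (c1 0)). exact (eigA_span _ _ H).
      * apply dimC_0, barHeigA_eq0.
    + assert (Hl : lam <> RtoC 2) by (intro E; apply Hn; split; auto).
      split.
      * apply (dimC_1 _ _ c0p (checkHeig_eigD_vec lam 1 1 eq_refl) eq_refl).
        intros xi H. exists (xi c0p). exact (eigD_span _ _ Hl H).
      * apply dimC_0. intro xi. exact (barHeigD_eq0 _ _ Hl).
  - intros -> ->. split; [|split].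
    + apply (dimC_2 _ _ _ c0p c0m (checkHeig_eigD2_vec 1 0) (checkHeig_eigD2_vec 0 1));
        try reflexivity.
      intros xi H. exists (xi c0p), (xi c0m). exact (eigD2_span _ H).
    + apply (dimC_1 _ _ c0p barHeig_gamma_diff); [unfold gamma_diff, gamma; simpl; ring|].
      intros xi Hb. exists (xi c0p). exact (barHeigD2_span _ Hb).
    + intro xi. split.
      * intro Hb. exists (xi c0p). apply functional_extensionality, (barHeigD2_span _ Hb).
      * intros [t ->]. exact (barHeig_scal _ _ t _ barHeig_gamma_diff).
Qed.
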